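(* Let $\widetilde{\Sigma}=\widetilde{\Sigma}_1\uplus\cdots\uplus\widetilde{\Sigma}_n$ with pairwise disjoint visibly pushdown alphabets $\widetilde{\Sigma}_i$. For any visibly pushdown contextual order $\prec$ on $\widetilde{\Sigma}$, there exists a coherent visibly pushdown contextual order $\prec'$ on $\widetilde{\Sigma}$ such that $\mathrm{red}_\prec(P_1\bowtie\cdots\bowtie P_n)=\mathrm{red}_{\prec'}(P_1\parallel\cdots\parallel P_n)$ for any well-matched languages $P_1\subseteq\widetilde{\Sigma}_1^*,\ldots,P_n\subseteq\widetilde{\Sigma}_n^*$.
   Context: A visibly pushdown (VP) alphabet is a finite alphabet partitioned into calls, returns and internals; write $\Sigma^{\mathsf{call}}_i,\Sigma^{\mathsf{ret}}_i$ for the calls and returns of $\widetilde{\Sigma}_i$; $\widetilde{\Sigma}$ has as calls/returns/internals the unions. Calls and returns in a word are matched like opening and closing parentheses (internals ignored); unmatched ones are pending; a word is well-matched if none are pending. A visibly pushdown automaton (VPA) is a pushdown automaton with bottom symbol $\bot$ that pushes one non-$\bot$ symbol on each call, pops the top on each return (reading $\bot$ on empty stack without removing it), and leaves the stack unchanged on internals; it is deterministic if it has one initial state and at most one transition per configuration and letter, and complete if it has at least one. Shuffle: $P_1\parallel\cdots\parallel P_n=\{w\in\widetilde{\Sigma}^*:\Pi_{\widetilde{\Sigma}_i}(w)\in P_i\ \forall i\}$, $\Pi_{\widetilde{\Sigma}_i}$ erasing letters outside $\widetilde{\Sigma}_i$. A word is well-nested if every matched call–return pair consists of letters from the same $\widetilde{\Sigma}_k$;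 the well-nested shuffle $P_1\bowtie\cdots\bowtie P_n$ is the set of well-nested words of $P_1\parallel\cdots\parallel P_n$. $\mathbb{I}=\{(a,b):a\in\widetilde{\Sigma}_i,b\in\widetilde{\Sigma}_j,i\ne j\}$, $\equiv_{\mathbb{I}}$ the least reflexive transitive relation with $uabv\equiv_{\mathbb{I}}ubav$ for $(a,b)\in\mathbb{I}$. A contextual order is a map $\prec$ from $\widetilde{\Sigma}^*$ to strict total orders on $\widetilde{\Sigma}$; it induces $\preceq$: $\sigma\preceq\rho$ iff $\sigma$ is a prefix of $\rho$ or $\sigma=\alpha a\beta$, $\rho=\alpha b\gamma$ with $a\prec_\alpha b$. $\mathrm{red}_\prec(L)=\{w\in L:\forall u\in L,(u\equiv_{\mathbb{I}}w\wedge u\preceq w)\Rightarrow u=w\}$. $\prec$ is visibly pushdown if there is a complete deterministic VPA $A$ over $\widetilde{\Sigma}$ and a map $\mathsf{ord}$ from its states to strict total orders on $\widetilde{\Sigma}$ with $\prec_w=\mathsf{ord}(q)$, $q$ the state reached by $A$ after reading $w$. $\prec$ is coherent if for every $u\in\widetilde{\Sigma}^*$ and every $i$: if $u$ has pending calls and the last one is in $\Sigma^{\mathsf{call}}_i$, then $a\prec_u r$ for all $a\in\widetilde{\Sigma}_i$ and $r\in\bigcup_{j\ne i}\Sigma^{\mathsf{ret}}_j$. *)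

From mathcomp Require Import all_boot.
Set Implicit Arguments. Unset Strict Implicit. Unset Printing Implicit Defensive.

Inductive vpkind := Call | Ret | Int.

Section VP.
(* The global alphabet Sigma~ = Sigma~_1 ⊎ ... ⊎ Sigma~_n is a finite type;
   [comp a] is the index i of the component Sigma~_i containing a, and
   [kind a] says whether a is a call, return or internal. *)
Variables (n : nat) (Sigma : finType) (comp : Sigma -> 'I_n) (kind : Sigma -> vpkind).

(* Scan of a word: returns the list of matched (call, return) letter pairs,
   the stack of pending calls (head = last pending call), and the number of
   pending returns. *)
Fixpoint scan (w : seq Sigma) (st : seq Sigma)
  : seq (Sigma * Sigma) * seq Sigma * nat :=
  match w with
  | [::] => ([::], st, 0)
  | a :: w' =>
    match kind a with
    | Call => scan w' (a :: st)
    | Ret =>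
      match st with
      | [::] => let: (p, s, r) := scan w' [::] in (p, s, r.+1)
      | c :: st' => let: (p, s, r) := scan w' st' in ((c, a) :: p, s, r)
      end
    | Int => scan w' st
    end
  end.

Definition matched_pairs (w : seq Sigma) := (scan w [::]).1.1.
Definition pending_calls (w : seq Sigma) := (scan w [::]).1.2.
Definition pending_returns (w : seq Sigma) := (scan w [::]).2.

Definition well_matched (w : seq Sigma) : Prop :=
  pending_calls w = [::] /\ pending_returns w = 0.

Definition well_nested (w : seq Sigma) : Prop :=
  forall c r, (c, r) \in matched_pairs w -> comp c = comp r.

Definition proj (i : 'I_n) (w : seq Sigma) := [seq a <- w | comp a == i].

Definition shuffle (P : 'I_n -> seq Sigma -> Prop) (w : seq Sigma) : Prop :=
  forall i, P i (proj i w).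

Definition wn_shuffle (P : 'I_n -> seq Sigma -> Prop) (w : seq Sigma) : Prop :=
  shuffle P w /\ well_nested w.

Definition indep (a b : Sigma) : Prop := comp a <> comp b.

Inductive trace_equiv : seq Sigma -> seq Sigma -> Prop :=
  | te_refl w : trace_equiv w w
  | te_swap u a b v w : indep a b ->
      trace_equiv (u ++ b :: a :: v) w -> trace_equiv (u ++ a :: b :: v) w.

Definition strict_total (r : rel Sigma) : Prop :=
  [/\ irreflexive r, transitive r & forall a b, a != b -> r a b || r b a].

Definition contextual_order (prec : seq Sigma -> rel Sigma) : Prop :=
  forall u, strict_total (prec u).

Definition ctx_le (prec : seq Sigma -> rel Sigma) (s r : seq Sigma) : Prop :=
  prefix s r \/
  exists alpha a b beta gamma,
    s = alpha ++ a :: beta /\ r = alpha ++ b :: gamma /\ prec alpha a b.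

Definition red (prec : seq Sigma -> rel Sigma) (L : seq Sigma -> Prop)
    (w : seq Sigma) : Prop :=
  L w /\ forall u, L u -> trace_equiv u w -> ctx_le prec u w -> u = w.

(* Complete deterministic VPA over Sigma (bottom symbol represented by None).
   Transition functions are total (completeness); the one used on a letter is
   selected by its kind. *)
Record dvpa := DVPA {
  vstate : finType;
  vstack : finType;
  vinit : vstate;
  vcall : vstate -> Sigma -> vstate * vstack;
  vret : vstate -> option vstack -> Sigma -> vstate;
  vint : vstate -> Sigma -> vstate
}.

Fixpoint vrun (A : dvpa) (q : vstate A) (st : seq (vstack A)) (w : seq Sigma)
  : vstate A :=
  match w with
  | [::] => q
  | a :: w' =>
    match kind a with
    | Call => let: (q', g) := vcall q a in vrun q' (g :: st) w'
    | Ret =>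
      match st with
      | [::] => vrun (vret q None a) [::] w'
      | g :: st' => vrun (vret q (Some g) a) st' w'
      end
    | Int => vrun (vint q a) st w'
    end
  end.

Definition reach (A : dvpa) (w : seq Sigma) : vstate A := vrun (vinit A) [::] w.

Definition vp_ctx_order (prec : seq Sigma -> rel Sigma) : Prop :=
  contextual_order prec /\
  exists (A : dvpa) (ord : vstate A -> rel Sigma),
    (forall q, strict_total (ord q)) /\
    forall w a b, prec w a b = ord (reach A w) a b.

Definition coherent (prec : seq Sigma -> rel Sigma) : Prop :=
  forall u c rest, pending_calls u = c :: rest ->
    forall a r, comp a = comp c -> kind r = Ret -> comp r <> comp c ->
      prec u a r.

End VP.

From mathcomp Require Import all_boot.
Set Implicit Arguments. Unset Strict Implicit. Unset Printing Implicit Defensive.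

(* The coherent order [coherent_prec prec] puts, after a prefix [w], every
   return that would be matched with the last pending call of [w] across
   components above all other letters, and otherwise agrees with [prec]; an
   automaton for [prec] that also tracks the last pending call computes it.
   On well-nested words no such return occurs, so the two orders agree there.
   A [coherent_prec]-minimal word of the plain shuffle is well-nested: at its
   first mismatched return, the last pending call still has to be matched
   inside its own component, and moving the next letter of that component in
   front of the return yields a smaller equivalent word.  Conversely, let [w]
   be [prec]-minimal in the well-nested shuffle and [u] an equivalent word
   that is smaller for [coherent_prec]; at the first difference [u] reads a
   letter that keeps the prefix well-nested, and since the projections of the
   rest of [u] close all pending calls, the prefix can be completed into a
   well-nested word with the projections of [u], contradicting minimality. *)

Lemma filter_eq_cons (T : Type) (p : pred T) s e t : filter p s = e :: t ->
  exists s1 s2, [/\ s = s1 ++ e :: s2, filter p s1 = [::], p e & filter p s2 = t].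
Proof.
elim: s => [//|x s IH] /=; case: ifP => [px [<- <-]|npx /IH [s1 [s2 [-> p_s1 pe p_s2]]]].
  by exists [::], s.
by exists (x :: s1), s2; rewrite /= npx p_s1.
Qed.

Lemma cat_cons_inj (T : Type) (s x y : seq T) (a b : T) :
  s ++ a :: x = s ++ b :: y -> a = b.
Proof. by move/(congr1 (drop (size s))); rewrite !drop_size_cat // => -[]. Qed.

Section LexLast.
Variables (Sigma : finType) (p : pred Sigma) (r : rel Sigma).

Definition lex_last : rel Sigma := fun a b => if p a == p b then r a b else p b.

Lemma strict_total_lex_last : strict_total r -> strict_total lex_last.
Proof.
case=> irr_r tr_r tot_r; split.
- by move=> a; rewrite /lex_last eqxx irr_r.
- move=> b a c; rewrite /lex_last.
  by case: (p a); case: (p b); case: (p c) => //=; apply: tr_r.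
- by move=> a b neq_ab; rewrite /lex_last; case: (p a); case: (p b) => //=; apply: tot_r.
Qed.

End LexLast.

Section VisiblyPushdownWords.
Variables (n : nat) (Sigma : finType) (comp : Sigma -> 'I_n) (kind : Sigma -> vpkind).

Lemma scan_cat x y st :
  scan kind (x ++ y) st =
  ((scan kind x st).1.1 ++ (scan kind y (scan kind x st).1.2).1.1,
   (scan kind y (scan kind x st).1.2).1.2,
   (scan kind x st).2 + (scan kind y (scan kind x st).1.2).2).
Proof.
elim: x st => [|a x IH] st /=; first by case: (scan kind y st) => [[]].
case: (kind a) => //; case: st => [|c st].
- by rewrite IH; case: (scan kind x [::]) => [[]].
- by rewrite IH; case: (scan kind x st) => [[]].
Qed.

Definition same_comp (cr : Sigma * Sigma) := comp cr.1 == comp cr.2.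

Definition well_nestedb w := all same_comp (matched_pairs kind w).

Lemma well_nestedP w : reflect (well_nested comp kind w) (well_nestedb w).
Proof.
apply: (iffP allP) => [wn c r /wn /eqP //|wn [c r] /wn /eqP].
by rewrite /same_comp /= => ->.
Qed.

Lemma well_nestedb_cat x y : well_nestedb (x ++ y) =
  well_nestedb x && all same_comp (scan kind y (pending_calls kind x)).1.1.
Proof. by rewrite /well_nestedb /matched_pairs /pending_calls scan_cat all_cat. Qed.

Lemma well_nestedb_catl x y : well_nestedb (x ++ y) -> well_nestedb x.
Proof. by rewrite well_nestedb_cat => /andP[]. Qed.

Definition is_ret (a : Sigma) := if kind a is Ret then true else false.

(* A return read while [top] is the last pending call gets matched with it. *)
Definition mismatched_ret (top : option Sigma) (a : Sigma) :=
  is_ret a && (if top is Some c then comp a != comp c else false).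

Lemma well_nestedb_rcons w a : well_nestedb (rcons w a) =
  well_nestedb w && ~~ mismatched_ret (ohead (pending_calls kind w)) a.
Proof.
rewrite -cats1 well_nestedb_cat /mismatched_ret /is_ret /=.
case: (kind a) => /=; rewrite ?andbT //.
by case: (pending_calls kind w) => [|c s] /=; rewrite ?andbT // negbK eq_sym.
Qed.

Lemma well_nested_no_mismatch alpha a g : well_nestedb (alpha ++ a :: g) ->
  ~~ mismatched_ret (ohead (pending_calls kind alpha)) a.
Proof.
by rewrite -cat_rcons => /well_nestedb_catl; rewrite well_nestedb_rcons => /andP[].
Qed.

Lemma first_mismatch w : ~~ well_nestedb w -> exists alpha a g,
  [/\ w = alpha ++ a :: g, well_nestedb alpha
    & mismatched_ret (ohead (pending_calls kind alpha)) a].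
Proof.
elim/last_ind: w => [//|w a IH]; rewrite well_nestedb_rcons negb_and negbK.
case/orP=> [/IH [alpha [b [g [-> wn_alpha mis_b]]]] | mis_a].
  by exists alpha, b, (rcons g a); rewrite rcons_cat.
have [wn_w | /IH [alpha [b [g [-> wn_alpha mis_b]]]]] := boolP (well_nestedb w).
  by exists w, a, [::]; rewrite cats1.
by exists alpha, b, (rcons g a); rewrite rcons_cat.
Qed.

Lemma proj_cat i x y : proj comp i (x ++ y) = proj comp i x ++ proj comp i y.
Proof. exact: filter_cat. Qed.

Lemma scan_proj_stack i x st : all same_comp (scan kind x st).1.1 ->
  (scan kind (proj comp i x) (proj comp i st)).1.2 = proj comp i (scan kind x st).1.2.
Proof.
elim: x st => [//|a x IH] st.
rewrite -cat1s proj_cat !scan_cat all_cat => /andP[wn_a wn_x].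
rewrite -IH //; congr (scan _ _ _).1.2; move: wn_a {wn_x}; rewrite /proj /same_comp /=.
case Ka: (kind a); case: st => [|c st];
  case: (eqVneq (comp a) i) => [<-|/negbTE ne] /=; rewrite ?Ka ?eqxx ?ne //=.
all: by rewrite andbT => /eqP ->; rewrite ?eqxx ?ne.
Qed.

Lemma pending_calls_proj i w : well_nestedb w ->
  pending_calls kind (proj comp i w) = proj comp i (pending_calls kind w).
Proof. exact: scan_proj_stack. Qed.

Lemma pending_call_answered alpha g c s :
  well_nestedb alpha -> pending_calls kind alpha = c :: s ->
  well_matched kind (proj comp (comp c) (alpha ++ g)) ->
  proj comp (comp c) g != [::].
Proof.
move=> wn_alpha pend_alpha [+ _]; apply: contraPneq => proj_g.
by rewrite proj_cat proj_g cats0 pending_calls_proj // pend_alpha /proj /= eqxx.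
Qed.

Lemma trace_equiv_trans u v w :
  trace_equiv comp u v -> trace_equiv comp v w -> trace_equiv comp u w.
Proof. by elim=> // pre a b v' w' ind_ab _ IH /IH; apply: te_swap. Qed.

Lemma trace_equiv_cons a u w :
  trace_equiv comp u w -> trace_equiv comp (a :: u) (a :: w).
Proof.
elim=> [w'|pre b c v w' ind_bc _ IH]; first exact: te_refl.
exact: (@te_swap _ _ comp (a :: pre) _ _ _ _ ind_bc IH).
Qed.

Lemma trace_equiv_commute pre a u v : [seq b <- u | comp b == comp a] = [::] ->
  trace_equiv comp (pre ++ u ++ a :: v) (pre ++ a :: u ++ v).
Proof.
elim: u pre => [|b u IH] pre /=; first by move=> _; apply: te_refl.
case: ifP => // ne_ba /(IH (rcons pre b)); rewrite !cat_rcons => /trace_equiv_trans.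
apply; apply: te_swap; last exact: te_refl.
by apply/eqP; rewrite ne_ba.
Qed.

Lemma trace_equiv_size u w : trace_equiv comp u w -> size u = size w.
Proof. by elim=> // pre a b v w' _ _ <-; rewrite !size_cat. Qed.

Lemma trace_equiv_proj u w :
  trace_equiv comp u w -> forall i, proj comp i u = proj comp i w.
Proof.
elim=> // pre a b v w' ind_ab _ IH i; rewrite -IH !proj_cat /proj /=.
case Ea: (comp a == i); case Eb: (comp b == i) => //.
by case: ind_ab; rewrite (eqP Ea) (eqP Eb).
Qed.

Lemma proj_commute u a v : [seq b <- u | comp b == comp a] = [::] ->
  forall i, proj comp i (u ++ a :: v) = proj comp i (a :: u ++ v).
Proof. by move=> no_a; apply/trace_equiv_proj/(trace_equiv_commute [::]). Qed.

Lemma proj_trace_equiv u w :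
  (forall i, proj comp i u = proj comp i w) -> trace_equiv comp u w.
Proof.
elim: w u => [|b w IH] u eq_proj.
  case: u eq_proj => [|a u] eq_proj; first exact: te_refl.
  by have := eq_proj (comp a); rewrite /proj /= eqxx.
have := eq_proj (comp b); rewrite /proj /= eqxx => proj_u.
have [u1 [u2 [def_u no_b_u1 _ _]]] := filter_eq_cons proj_u.
rewrite def_u in eq_proj *.
apply: trace_equiv_trans (trace_equiv_commute [::] _ no_b_u1) _.
apply/trace_equiv_cons/IH => i; move: (eq_proj i).
by rewrite proj_commute // /proj /=; case: ifP => // _ [].
Qed.

Lemma exists_next_letter x r : r != [::] -> well_nestedb x ->
  (forall i, well_matched kind (proj comp i (x ++ r))) ->
  exists r1 e r2, [/\ r = r1 ++ e :: r2, [seq b <- r1 | comp b == comp e] = [::]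
    & ~~ mismatched_ret (ohead (pending_calls kind x)) e].
Proof.
move=> r_nil wn_x wm_xr.
case pend_x: (pending_calls kind x) => [|c s].
  case: r r_nil {wm_xr} => // e r2 _.
  by exists [::], e, r2; rewrite /mismatched_ret andbF.
have := pending_call_answered wn_x pend_x (wm_xr _).
case proj_r: (proj comp (comp c) r) => [//|e t] _.
have [r1 [r2 [-> no_c_r1 /eqP comp_e _]]] := filter_eq_cons proj_r.
by exists r1, e, r2; rewrite comp_e /mismatched_ret /= comp_e eqxx andbF.
Qed.

Lemma well_nested_completion x r : well_nestedb x ->
  (forall i, well_matched kind (proj comp i (x ++ r))) ->
  exists2 y, (forall i, proj comp i y = proj comp i r) & well_nestedb (x ++ y).
Proof.
have [N] := ubnP (size r); elim: N x r => // N IH x r size_r wn_x wm_xr.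
have [->|r_nil] := eqVneq r [::]; first by exists [::]; rewrite ?cats0.
have [r1 [e [r2 [def_r no_e_r1 ok_e]]]] := exists_next_letter r_nil wn_x wm_xr.
have proj_r i : proj comp i r = proj comp i (e :: r1 ++ r2) by rewrite def_r proj_commute.
have [|||y proj_y wn_y] := IH (rcons x e) (r1 ++ r2).
- by move: size_r; rewrite def_r !size_cat /= addnS.
- by rewrite well_nestedb_rcons wn_x.
- by move=> i; rewrite cat_rcons proj_cat -proj_r -proj_cat.
exists (e :: y); last by rewrite -cat_rcons.
by move=> i; rewrite proj_r -cat1s proj_cat proj_y -proj_cat.
Qed.

Definition coherent_prec (prec : seq Sigma -> rel Sigma) (w : seq Sigma) : rel Sigma :=
  lex_last (mismatched_ret (ohead (pending_calls kind w))) (prec w).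

Lemma coherent_coherent_prec prec : coherent comp kind (coherent_prec prec).
Proof.
move=> u c s pend_u a r comp_a ret_r /eqP comp_r.
rewrite /coherent_prec /lex_last pend_u /mismatched_ret /= comp_a eqxx comp_r.
by rewrite andbF /is_ret ret_r.
Qed.

Definition track_top (A : dvpa Sigma) : dvpa Sigma :=
  @DVPA Sigma (vstate A * option Sigma)%type (vstack A * option Sigma)%type
    (vinit A, None)
    (fun qt a => (((vcall qt.1 a).1, Some a), ((vcall qt.1 a).2, qt.2)))
    (fun qt og a => if og is Some gt then (vret qt.1 (Some gt.1) a, gt.2)
                    else (vret qt.1 None a, None))
    (fun qt a => (vint qt.1 a, qt.2)).

(* The second components that [track_top] keeps on its stack while the calls
   [s] are pending: next to each call, the pending call just below it. *)
Fixpoint tops_below (s : seq Sigma) : seq (option Sigma) :=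
  if s is _ :: s' then ohead s' :: tops_below s' else [::].

Lemma vrun_track_top A w q gs s : size gs = size s ->
  @vrun _ kind (track_top A) (q, ohead s) (zip gs (tops_below s)) w =
  (vrun kind q gs w, ohead (scan kind w s).1.2).
Proof.
elim: w q gs s => [//|a w IH] q gs s size_gs /=.
case: (kind a).
- by case: (vcall q a) => q' g; rewrite (IH _ (g :: gs) (a :: s)) //= size_gs.
- case: gs s size_gs => [|g gs] [|c s] //= => [_|[size_gs]].
  + by rewrite (IH _ [::] [::]) //; case: (scan kind w [::]) => [[]].
  + by rewrite (IH _ gs s) //; case: (scan kind w s) => [[]].
- exact: IH.
Qed.

Lemma reach_track_top A w :
  reach kind (track_top A) w = (reach kind A w, ohead (pending_calls kind w)).
Proof. exact: (@vrun_track_top A w (vinit A) [::] [::]). Qed.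

Lemma vp_ctx_order_coherent_prec prec :
  vp_ctx_order kind prec -> vp_ctx_order kind (coherent_prec prec).
Proof.
case=> ctx_prec [A [ord [ord_total prec_ord]]]; split.
  by move=> u; apply/strict_total_lex_last/ctx_prec.
exists (track_top A), (fun qt => lex_last (mismatched_ret qt.2) (ord qt.1)); split.
  by move=> qt; apply/strict_total_lex_last/ord_total.
by move=> w a b; rewrite reach_track_top /coherent_prec /lex_last prec_ord.
Qed.

Lemma ctx_le_trace_equiv (r : seq Sigma -> rel Sigma) u w :
  trace_equiv comp u w -> ctx_le r u w -> u = w \/
  exists alpha a b beta gamma,
    [/\ u = alpha ++ a :: beta, w = alpha ++ b :: gamma & r alpha a b].
Proof.
move=> equiv_uw [|[alpha [a [b [beta [gamma [-> [-> r_ab]]]]]]]].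
  by rewrite prefixE (trace_equiv_size equiv_uw) take_size => /eqP; left.
by right; exists alpha, a, b, beta, gamma.
Qed.

Section Reduction.
Variables (prec : seq Sigma -> rel Sigma) (P : 'I_n -> seq Sigma -> Prop).
Hypothesis P_well_matched : forall i w, P i w -> well_matched kind w.

Let shuffle_well_matched w :
  shuffle comp P w -> forall i, well_matched kind (proj comp i w).
Proof. by move=> Pw i; apply: P_well_matched (Pw i). Qed.

Lemma shuffle_proj u w :
  (forall i, proj comp i u = proj comp i w) -> shuffle comp P w -> shuffle comp P u.
Proof. by move=> eq_proj Pw i; rewrite eq_proj. Qed.

Lemma coherent_red_of_wn_red w : contextual_order prec ->
  red comp prec (wn_shuffle comp kind P) w ->
  red comp (coherent_prec prec) (shuffle comp P) w.
Proof.
move=> ctx_prec [[Pw /well_nestedP wn_w] min_w]; split=> // u Pu equiv_uw.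
case/(ctx_le_trace_equiv equiv_uw) => [//|[alpha [a [b [beta [gamma [def_u def_w]]]]]]].
have ok_b : ~~ mismatched_ret (ohead (pending_calls kind alpha)) b.
  by move: wn_w; rewrite def_w => /well_nested_no_mismatch.
rewrite /coherent_prec /lex_last (negbTE ok_b).
case: (boolP (mismatched_ret _ a)) => //= ok_a lt_ab.
have wn_alpha_a : well_nestedb (rcons alpha a).
  rewrite well_nestedb_rcons ok_a andbT.
  by move: wn_w; rewrite def_w => /well_nestedb_catl.
have proj_u i : proj comp i (rcons alpha a ++ beta) = proj comp i w.
  by rewrite cat_rcons -def_u (trace_equiv_proj equiv_uw).
have [|y proj_y wn_y] := well_nested_completion (r := beta) wn_alpha_a.
  by move=> i; rewrite proj_u; apply: shuffle_well_matched.
have proj_v i : proj comp i (rcons alpha a ++ y) = proj comp i w.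
  by rewrite proj_cat proj_y -proj_cat proj_u.
have eq_vw : rcons alpha a ++ y = w.
  apply: (min_w _ _ (proj_trace_equiv proj_v)).
  - by split; [apply: shuffle_proj proj_v Pw | apply/well_nestedP].
  - by right; exists alpha, a, b, y, gamma; rewrite cat_rcons.
have eq_ab : a = b by apply: (@cat_cons_inj _ alpha y gamma); rewrite -cat_rcons eq_vw.
by have [irr _ _] := ctx_prec alpha; rewrite eq_ab irr in lt_ab.
Qed.

Lemma well_nested_of_coherent_red w :
  red comp (coherent_prec prec) (shuffle comp P) w -> well_nestedb w.
Proof.
case=> Pw min_w; apply: contraT => /first_mismatch [alpha [a [g [def_w wn_alpha mis_a]]]].
have wm_w := shuffle_well_matched Pw; rewrite def_w in wm_w.
have [r1 [e [r2 [def_ag no_e_r1 ok_e]]]] :=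
  exists_next_letter (r := a :: g) isT wn_alpha wm_w.
have proj_u i : proj comp i (alpha ++ e :: r1 ++ r2) = proj comp i w.
  by rewrite def_w def_ag proj_cat [in RHS]proj_cat proj_commute.
have eq_uw : alpha ++ e :: r1 ++ r2 = w.
  apply: (min_w _ (shuffle_proj proj_u Pw) (proj_trace_equiv proj_u)).
  right; exists alpha, e, a, (r1 ++ r2), g.
  by rewrite /coherent_prec /lex_last (negbTE ok_e) mis_a.
have eq_ea : e = a by apply: (@cat_cons_inj _ alpha (r1 ++ r2) g); rewrite eq_uw.
by rewrite eq_ea mis_a in ok_e.
Qed.

Lemma wn_red_of_coherent_red w :
  red comp (coherent_prec prec) (shuffle comp P) w ->
  red comp prec (wn_shuffle comp kind P) w.
Proof.
move=> red_w; have wn_w := well_nested_of_coherent_red red_w.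
case: red_w => Pw min_w; split; first by split; last exact/well_nestedP.
move=> u [Pu /well_nestedP wn_u] equiv_uw.
case/(ctx_le_trace_equiv equiv_uw) => [//|].
move=> [alpha [a [b [beta [gamma [def_u def_w lt_ab]]]]]].
apply: min_w Pu equiv_uw _; right; exists alpha, a, b, beta, gamma; do 2!split => //.
have ok_a : ~~ mismatched_ret (ohead (pending_calls kind alpha)) a.
  by move: wn_u; rewrite def_u => /well_nested_no_mismatch.
have ok_b : ~~ mismatched_ret (ohead (pending_calls kind alpha)) b.
  by move: wn_w; rewrite def_w => /well_nested_no_mismatch.
by rewrite /coherent_prec /lex_last (negbTE ok_a) (negbTE ok_b).
Qed.

End Reduction.

End VisiblyPushdownWords.

Theorem lemma4p3 (n : nat) (Sigma : finType) (comp : Sigma -> 'I_n)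
    (kind : Sigma -> vpkind) (prec : seq Sigma -> rel Sigma) :
  vp_ctx_order kind prec ->
  exists prec' : seq Sigma -> rel Sigma,
    vp_ctx_order kind prec' /\ coherent comp kind prec' /\
    forall P : 'I_n -> seq Sigma -> Prop,
      (forall i w, P i w -> all (fun a => comp a == i) w /\ well_matched kind w) ->
      forall w,
        red comp prec (wn_shuffle comp kind P) w <->
        red comp prec' (shuffle comp P) w.
Proof.
move=> vp_prec; exists (coherent_prec comp kind prec).
split; first exact: vp_ctx_order_coherent_prec.
split; first exact: coherent_coherent_prec.
move=> P P_wm w; have wm_P i u (Pu : P i u) := (P_wm i u Pu).2.
split; first exact: (coherent_red_of_wn_red wm_P vp_prec.1).
exact: wn_red_of_coherent_red.
Qed.
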